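(* Let $G=KB(H)$ for some triangle-free graph $H$. If $I$ is an independent set of $G$ with $|I|=n\ge 3$ such that $\left|\bigcap_{v\in I}N_G(v)\right|\ge 3$, then $\left|\bigcup_{v\in I}N_G(v)\right|>n$.
   Context: All graphs are finite and simple. A biclique of a graph $H$ is a set $P\subseteq V(H)$ such that the induced subgraph $H[P]$ is a complete bipartite graph with both parts nonempty, and $P$ is inclusion-maximal with this property. The biclique graph $KB(H)$ has the set of bicliques of $H$ as vertex set, two distinct bicliques being adjacent iff they intersect. $N_G(v)$ denotes the (open) neighbourhood of $v$ in $G$. *)

From mathcomp Require Import all_boot.
Set Implicit Arguments. Unset Strict Implicit. Unset Printing Implicit Defensive.

Section Graph.
Variables (T : finType) (e : rel T).

Definition simple_graph : Prop := symmetric e /\ irreflexive e.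

Definition triangle_free : Prop :=
  forall x y z : T, e x y -> e y z -> e z x -> False.

Definition complete_bipartite_induced (P : {set T}) : bool :=
  [exists X : {set T}, exists Y : {set T},
    [&& X :|: Y == P, X :&: Y == set0, X != set0, Y != set0 &
        [forall x in P, forall y in P,
          e x y == ((x \in X) && (y \in Y)) || ((x \in Y) && (y \in X))]]].

Definition biclique (P : {set T}) : bool :=
  complete_bipartite_induced P &&
  [forall Q : {set T}, (P \subset Q) && complete_bipartite_induced Q ==> (Q == P)].

(* Biclique graph KB(H): vertices are bicliques, adjacent iff distinct
   and intersecting. *)
Definition KB_adj (P Q : {set T}) : Prop := P != Q /\ P :&: Q != set0.

Definition KB_nbhd (v : {set T}) : {set {set T}} :=
  [set Q : {set T} | biclique Q && (Q != v) && (Q :&: v != set0)].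

Definition KB_independent (I : {set {set T}}) : Prop :=
  (forall v, v \in I -> biclique v) /\
  (forall v w, v \in I -> w \in I -> v != w -> ~ KB_adj v w).

End Graph.

From mathcomp Require Import all_boot.
Set Implicit Arguments. Unset Strict Implicit. Unset Printing Implicit Defensive.

(* In a triangle-free graph H a non-isolated vertex x spans the
   biclique  star x = CN(N(x)) :|: N(x),  where CN(A) is the set of vertices
   adjacent to all of A; moreover every biclique through x contains CN(N(x)).
   Consequently vertices of disjoint bicliques have distinct stars, and the
   star of a vertex a of v meets a biclique disjoint from v only in
   neighbours of a.
   For a biclique v, outer_stars v is the set of stars of vertices of v that
   differ from v; they are KB-neighbours of v.  For an independent set I of
   KB(H) these families are pairwise disjoint, and nonempty as soon as v has
   a KB-neighbour.  A counting lemma on disjoint families then gives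
   |I| < |U|, U the union of the neighbourhoods, provided some common
   neighbour lies in no outer_stars v or some outer_stars v has two elements;
   a case analysis on two common neighbours B1, B2, using a third member of I
   and triangle-freeness, provides this. *)

(* Choosing a representative in each member of a disjoint family of nonempty
   subsets of U gives |I| <= |U|; the inequality is strict if U has an element
   outside the family or some member has two elements. *)
Lemma disjoint_family_card_lt (V W : finType) (I : {set V}) (S : V -> {set W})
    (U : {set W}) :
  (forall v, v \in I -> S v != set0) ->
  (forall v w y, v \in I -> w \in I -> y \in S v -> y \in S w -> v = w) ->
  (forall v, v \in I -> S v \subset U) ->
  (exists2 y, y \in U & forall v, v \in I -> y \notin S v) \/
  (exists2 v, v \in I & 1 < #|S v|) ->
  #|I| < #|U|.
Proof.
move=> S_nonempty S_disj S_sub surplus.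
have [y0 _] : exists y0 : W, True.
  by case: surplus => [[y _ _] | [v _ /ltnW/card_gt0P [y _]]]; exists y.
pose r v := odflt y0 [pick y in S v].
have r_in v : v \in I -> r v \in S v.
  move=> vI; rewrite /r; case: pickP => [y //|none].
  by have /set0Pn [y yS] := S_nonempty v vI; rewrite none in yS.
have r_inj : {in I &, injective r}.
  by move=> v w vI wI rvw; apply: (S_disj v w (r v) vI wI (r_in v vI)); rewrite rvw r_in.
have not_rep v y : v \in I -> y \in S v -> y != r v -> y \notin r @: I.
  move=> vI yS yr; apply/imsetP => [[w wI yw]].
  have vw := S_disj v w y vI wI yS; rewrite yw r_in // in vw.
  by move: yr; rewrite yw (vw isT) eqxx.
rewrite -(card_in_imset r_inj); apply: proper_card; apply/properP; split.
  by apply/subsetP => _ /imsetP [v vI ->]; apply: (subsetP (S_sub v vI)); exact: r_in.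
case: surplus => [[y yU y_out] | [v vI /card_gt1P [y1 [y2 [y1S y2S y12]]]]].
  by exists y => //; apply/imsetP => [[v vI yv]]; move: (y_out v vI); rewrite yv r_in.
have [y1r | y1r] := eqVneq y1 (r v).
  exists y2; first exact: (subsetP (S_sub v vI)).
  by apply: not_rep vI y2S _; rewrite -y1r eq_sym.
by exists y1; [exact: (subsetP (S_sub v vI)) | exact: not_rep vI y1S y1r].
Qed.

Lemma third_element (V : finType) (A : {set V}) a b :
  2 < #|A| -> exists2 c, c \in A & (c != a) && (c != b).
Proof.
move=> A_gt2; have /subsetPn [c cA cNab] : ~~ (A \subset [set a; b]).
  apply: contraTN A_gt2 => /subset_leq_card; rewrite -leqNgt cards2 => /leq_trans; apply.
  by case: (a != b).
by exists c; rewrite // !inE negb_or in cNab.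
Qed.

Section TriangleFreeBicliques.
Variables (T : finType) (e : rel T).
Hypothesis e_sym : symmetric e.
Hypothesis e_irr : irreflexive e.
Hypothesis e_tf : triangle_free e.

Definition nbhd (x : T) : {set T} := [set y | e x y].
Definition common_nbhd (A : {set T}) : {set T} := [set z | [forall y in A, e z y]].
Definition star (x : T) : {set T} := common_nbhd (nbhd x) :|: nbhd x.

Lemma in_nbhd x y : (y \in nbhd x) = e x y.
Proof. by rewrite inE. Qed.

Lemma common_nbhdP (A : {set T}) z :
  reflect (forall y, y \in A -> e z y) (z \in common_nbhd A).
Proof. by rewrite inE; apply: forall_inP. Qed.

Lemma in_star x y : (y \in star x) = (y \in common_nbhd (nbhd x)) || e x y.
Proof. by rewrite inE in_nbhd. Qed.

Lemma star_center x : x \in star x.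
Proof. by rewrite in_star; apply/orP; left; apply/common_nbhdP => y; rewrite in_nbhd. Qed.

Lemma star_nbhd x y : e x y -> y \in star x.
Proof. by rewrite in_star => ->; rewrite orbT. Qed.

Definition bipartition (P X Y : {set T}) : Prop :=
  [/\ X :|: Y = P, X :&: Y = set0, X != set0, Y != set0 &
      forall x y, x \in P -> y \in P ->
        e x y = ((x \in X) && (y \in Y)) || ((x \in Y) && (y \in X))].

Lemma bipartitionP P : complete_bipartite_induced e P -> exists X Y, bipartition P X Y.
Proof.
case/existsP=> X /existsP [Y /and5P [/eqP XYP /eqP XY0 X0 Y0 /forallP adj]].
exists X, Y; split=> // x y xP yP.
by have /implyP/(_ xP)/forallP/(_ y)/implyP/(_ yP)/eqP := adj x.
Qed.

Lemma bipartition_cbi P X Y : bipartition P X Y -> complete_bipartite_induced e P.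
Proof.
case=> XYP XY0 X0 Y0 adj; apply/existsP; exists X; apply/existsP; exists Y.
rewrite XYP XY0 !eqxx X0 Y0 /=; apply/forallP=> x; apply/implyP=> xP.
by apply/forallP=> y; apply/implyP=> yP; rewrite adj.
Qed.

Lemma bipartitionC P X Y : bipartition P X Y -> bipartition P Y X.
Proof.
case=> XYP XY0 X0 Y0 adj; split=> //; rewrite 1?setUC 1?setIC //.
by move=> x y xP yP; rewrite adj // orbC.
Qed.

Lemma bipartition_mem P X Y x : bipartition P X Y -> x \in P -> (x \in X) || (x \in Y).
Proof. by case=> XYP _ _ _ _; rewrite -XYP inE. Qed.

Lemma bipartition_disj P X Y x : bipartition P X Y -> x \in X -> x \in Y -> False.
Proof. by case=> _ XY0 _ _ _ xX xY; have := in_set0 x; rewrite -XY0 inE xX xY. Qed.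

Lemma bipartition_wlog P x (Q : Prop) :
  complete_bipartite_induced e P -> x \in P ->
  (forall X Y, bipartition P X Y -> x \in X -> Q) -> Q.
Proof.
move=> /bipartitionP [X [Y XY]] xP side.
by case/orP: (bipartition_mem XY xP) => [xX|xY]; [exact: side XY xX |
  exact: side (bipartitionC XY) xY].
Qed.

Lemma biclique_max (P Q : {set T}) :
  biclique e P -> P \subset Q -> complete_bipartite_induced e Q -> Q = P.
Proof. by case/andP=> _ /forallP/(_ Q)/implyP max sPQ cQ; apply/eqP/max; rewrite sPQ cQ. Qed.

Lemma biclique_linked B u w : biclique e B -> u \in B -> w \in B ->
  e u w \/ exists2 t, t \in B & e u t /\ e w t.
Proof.
move=> /andP [/bipartitionP [X [Y XY]] _] uB wB.
case: (XY) => XYP _ /set0Pn [x0 x0X] /set0Pn [y0 y0Y] adj.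
have x0B : x0 \in B by rewrite -XYP inE x0X.
have y0B : y0 \in B by rewrite -XYP inE y0Y orbT.
case/orP: (bipartition_mem XY uB) => [uX|uY];
  case/orP: (bipartition_mem XY wB) => [wX|wY].
- by right; exists y0 => //; split; rewrite adj // ?uX ?wX y0Y.
- by left; rewrite adj // uX wY.
- by left; rewrite adj // uY wX orbT.
- by right; exists x0 => //; split; rewrite adj // ?uY ?wY x0X orbT.
Qed.

Lemma biclique_nbhd v x : biclique e v -> x \in v -> exists2 q, q \in v & e x q.
Proof.
move=> bv xv; case: (biclique_linked bv xv xv) => [|[t tv [xt _]]].
  by rewrite e_irr.
by exists t.
Qed.

Lemma bipartition_extend v X Y z : bipartition v X Y -> z \notin v ->
  (forall w, w \in v -> e z w = (w \in Y)) -> bipartition (z |: v) (z |: X) Y.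
Proof.
move=> XY zNv z_adj; case: (XY) => XYP _ _ Y0 adj.
have zNY : (z \in Y) = false by apply: contraNF zNv; rewrite -XYP inE orbC => ->.
have neq_z u : u \in v -> (u == z) = false by move=> uv; apply: contraNF zNv => /eqP <-.
split=> //.
- by rewrite -setUA XYP.
- apply/setP=> u; rewrite !inE; apply/negbTE/negP => /andP [/orP [/eqP -> | uX] uY].
    by rewrite zNY in uY.
  exact: bipartition_disj XY uX uY.
- by apply/set0Pn; exists z; rewrite !inE eqxx.
- move=> u w; rewrite !inE => /orP[/eqP->|uv] /orP[/eqP->|wv].
  + by rewrite eqxx e_irr zNY.
  + by rewrite z_adj // zNY eqxx neq_z //; case: (w \in Y); rewrite ?andbF.
  + by rewrite e_sym z_adj // zNY eqxx neq_z //; case: (u \in Y); rewrite ?andbF ?orbF.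
  + by rewrite adj // !neq_z.
Qed.

(* Every biclique v through x contains CN(N(x)): a vertex z of CN(N(x)) outside
   v is, by triangle-freeness, adjacent exactly to the part of v opposite to x,
   so it could be added to v, contradicting maximality. *)
Lemma common_nbhd_sub v x : biclique e v -> x \in v -> common_nbhd (nbhd x) \subset v.
Proof.
move=> bv xv; apply/subsetP => z /common_nbhdP zc.
apply: (bipartition_wlog (andP bv).1 xv) => X Y XY xX.
case: (XY) => XYP _ _ /set0Pn [y0 y0Y] adj.
have inY u : u \in Y -> u \in v by move=> uY; rewrite -XYP inE uY orbT.
have zY y : y \in Y -> e z y.
  by move=> yY; apply: zc; rewrite in_nbhd adj ?xX ?yY //; exact: inY.
apply/negPn/negP => zNv.
have z_adj w : w \in v -> e z w = (w \in Y).
  move=> wv; case/orP: (bipartition_mem XY wv) => [wX|wY]; last by rewrite zY.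
  have -> : (w \in Y) = false by apply/negP => wY; exact: bipartition_disj XY wX wY.
  apply/negP => zw; apply: (e_tf zw (_ : e w y0)); last by rewrite e_sym zY.
  by rewrite adj ?wX ?y0Y //; exact: inY.
have cQ := bipartition_cbi (bipartition_extend XY zNv z_adj).
have /setP /(_ z) := biclique_max bv (subsetUr _ _) cQ.
by rewrite !inE eqxx (negbTE zNv).
Qed.

Lemma star_bipartition x : (exists y, e x y) ->
  bipartition (star x) (common_nbhd (nbhd x)) (nbhd x).
Proof.
move=> [y0 xy0].
have cn_nadj u : u \in common_nbhd (nbhd x) -> e x u = false.
  by move=> /common_nbhdP cu; apply/negP => xu; have := cu u; rewrite in_nbhd e_irr => /(_ xu).
have cn_y0 u : u \in common_nbhd (nbhd x) -> e u y0.
  by move/common_nbhdP; apply; rewrite in_nbhd.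
split=> //.
- apply/setP=> u; rewrite in_setI in_set0 in_nbhd.
  by apply/negbTE/negP => /andP [/cn_nadj ->].
- by apply/set0Pn; exists x; apply/common_nbhdP => y; rewrite in_nbhd.
- by apply/set0Pn; exists y0; rewrite in_nbhd.
- move=> u w; rewrite !in_star !in_nbhd => /orP[uc|xu] /orP[wc|xw].
  + rewrite (cn_nadj u uc) (cn_nadj w wc) uc wc /=.
    by apply/negbTE/negP => uw; apply: (e_tf uw (cn_y0 w wc)); rewrite e_sym cn_y0.
  + by rewrite uc xw /=; move/common_nbhdP: uc; apply; rewrite in_nbhd.
  + by rewrite xu wc /= orbT e_sym; move/common_nbhdP: wc; apply; rewrite in_nbhd.
  + have uc : (u \in common_nbhd (nbhd x)) = false by apply: contraTF xu => /cn_nadj ->.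
    have wc : (w \in common_nbhd (nbhd x)) = false by apply: contraTF xw => /cn_nadj ->.
    rewrite uc wc /= andbF; apply/negbTE/negP => uw.
    by apply: (e_tf xu uw); rewrite e_sym.
Qed.

(* A complete bipartite set Q containing star x, with x in part X, is
   contained in star x: X lies in CN(N(x)) and Y in N(x). *)
Lemma star_maximal x Q X Y : bipartition Q X Y -> star x \subset Q -> x \in X ->
  Q \subset star x.
Proof.
move=> XY sQ xX; case: (XY) => _ _ _ _ adj.
have xQ : x \in Q by apply: (subsetP sQ); exact: star_center.
have xNY : (x \in Y) = false by apply/negP => xY; exact: bipartition_disj XY xX xY.
have nbhd_Q y : e x y -> y \in Q by move=> xy; apply: (subsetP sQ); exact: star_nbhd.
have nbhd_Y y : e x y -> y \in Y.
  by move=> xy; have yQ := nbhd_Q y xy; move: xy; rewrite adj // xX xNY orbF.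
apply/subsetP=> q qQ; rewrite in_star.
case/orP: (bipartition_mem XY qQ) => [qX|qY].
- apply/orP; left; apply/common_nbhdP=> y; rewrite in_nbhd => xy.
  by have yQ := nbhd_Q y xy; rewrite adj // qX nbhd_Y.
- by apply/orP; right; rewrite adj // xX qY.
Qed.

Lemma star_biclique x : (exists y, e x y) -> biclique e (star x).
Proof.
move=> x_nbhd; apply/andP; split; first exact: bipartition_cbi (star_bipartition x_nbhd).
apply/forallP=> Q; apply/implyP=> /andP[sQ cQ].
rewrite eqEsubset sQ andbT.
apply: (bipartition_wlog cQ (subsetP sQ x (star_center x))) => X Y XY xX.
exact: star_maximal XY sQ xX.
Qed.

Lemma star_outside v a y : biclique e v -> a \in v -> y \in star a -> y \notin v -> e a y.
Proof.
by move=> bv av; rewrite in_star => /orP [/(subsetP (common_nbhd_sub bv av)) -> |].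
Qed.

Lemma star_disjoint v w x y : biclique e v -> biclique e w -> [disjoint v & w] ->
  x \in v -> y \in w -> star x != star y.
Proof.
move=> bv bw vw xv yw; apply/eqP => sxy.
have yNv : y \notin v by rewrite (disjointFl vw yw).
have xy : e x y by apply: star_outside bv xv _ yNv; rewrite sxy star_center.
have [q qv xq] := biclique_nbhd bv xv.
have qNw : q \notin w by rewrite (disjointFr vw qv).
have yq : e y q by apply: star_outside bw yw _ qNw; rewrite -sxy star_nbhd.
by apply: (e_tf xy yq); rewrite e_sym.
Qed.

Definition outer_stars (v : {set T}) : {set {set T}} :=
  [set star x | x in [set x in v | star x != v]].

Lemma outer_starsP (v B : {set T}) :
  reflect (exists2 x, x \in v & B = star x /\ star x != v) (B \in outer_stars v).
Proof.
apply: (iffP imsetP) => [[x] | [x xv [-> nv]]]; last by exists x; rewrite // inE xv.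
by rewrite inE => /andP [xv nv] ->; exists x.
Qed.

Lemma outer_stars_mem (v : {set T}) x u :
  x \in v -> e x u -> u \notin v -> star x \in outer_stars v.
Proof.
move=> xv xu uNv; apply/outer_starsP; exists x => //; split=> //.
by apply: contraNneq uNv => <-; exact: star_nbhd.
Qed.

Lemma outer_stars_nbhd v B : biclique e v -> B \in outer_stars v -> B \in KB_nbhd e v.
Proof.
move=> bv /outer_starsP [x xv [-> nv]]; rewrite inE nv andbT.
have [q _ xq] := biclique_nbhd bv xv.
rewrite star_biclique; last by exists q.
by apply/set0Pn; exists x; rewrite inE star_center xv.
Qed.

(* A KB-neighbour B of v forces an edge leaving v, hence an outer star. *)
Lemma outer_stars_nonempty v B : biclique e v -> B \in KB_nbhd e v -> outer_stars v != set0.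
Proof.
rewrite inE => bv /andP [/andP [bB Bv] /set0Pn [w]]; rewrite inE => /andP [wB wv].
have /subsetPn [u uB uNv] : ~~ (B \subset v).
  by apply: contra Bv => sBv; rewrite (biclique_max bB sBv (andP bv).1).
apply/set0Pn; case: (biclique_linked bB wB uB) => [wu | [t tB [wt ut]]].
  by exists (star w); exact: outer_stars_mem wu uNv.
have [tv | tNv] := boolP (t \in v).
  by exists (star t); apply: outer_stars_mem tv _ uNv; rewrite e_sym.
by exists (star w); exact: outer_stars_mem wt tNv.
Qed.

Lemma outer_stars_disjoint v w B : biclique e v -> biclique e w -> [disjoint v & w] ->
  B \in outer_stars v -> B \in outer_stars w -> False.
Proof.
move=> bv bw vw /outer_starsP [x xv [-> _]] /outer_starsP [y yw [sxy _]].
by move: (star_disjoint bv bw vw xv yw); rewrite sxy eqxx.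
Qed.

Lemma star_reaches (v w : {set T}) a : biclique e v -> [disjoint v & w] -> a \in v ->
  star a :&: w != set0 -> exists2 d, d \in w & e a d /\ star d \in outer_stars w.
Proof.
move=> bv vw av /set0Pn [d]; rewrite inE => /andP [da dw].
have ad : e a d by apply: star_outside bv av da _; rewrite (disjointFl vw dw).
exists d => //; split=> //.
by apply: outer_stars_mem dw (_ : e d a) _; rewrite ?(disjointFr vw av) // e_sym.
Qed.

Section IndependentSet.
Variable I : {set {set T}}.
Hypothesis I_indep : KB_independent e I.

Let I_biclique {v} : v \in I -> biclique e v := I_indep.1 v.

Lemma independent_disjoint v w : v \in I -> w \in I -> v != w -> [disjoint v & w].
Proof.
move=> vI wI vw; rewrite -setI_eq0; apply/negPn/negP => vw_meet.
exact: (I_indep.2 v w vI wI vw (conj vw vw_meet)).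
Qed.

Lemma outer_stars_separate v w B : v \in I -> w \in I ->
  B \in outer_stars v -> B \in outer_stars w -> v = w.
Proof.
move=> vI wI Bv Bw; apply/eqP/negPn/negP => vw.
exact: outer_stars_disjoint (I_biclique vI) (I_biclique wI)
  (independent_disjoint vI wI vw) Bv Bw.
Qed.

(* Adjacent centres a, d in members v1, vk whose stars both meet a third
   member vm give two distinct outer stars of vm: equal ones would close a
   triangle with d and a's neighbour in vm. *)
Lemma third_member_split v1 vk vm a d : v1 \in I -> vk \in I -> vm \in I ->
  vm != v1 -> vm != vk -> a \in v1 -> d \in vk -> e a d ->
  star a :&: vm != set0 -> star d :&: vm != set0 -> 1 < #|outer_stars vm|.
Proof.
move=> v1I vkI vmI m1 mk av1 dvk ad a_vm d_vm.
have dj1 : [disjoint v1 & vm] by apply: independent_disjoint; rewrite // eq_sym.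
have djk : [disjoint vk & vm] by apply: independent_disjoint; rewrite // eq_sym.
have [f fvm [af f_out]] := star_reaches (I_biclique v1I) dj1 av1 a_vm.
have [g gvm [dg g_out]] := star_reaches (I_biclique vkI) djk dvk d_vm.
apply/card_gt1P; exists (star f), (star g); split=> //; apply/eqP => sfg.
have a_g : a \in star g by rewrite -sfg star_nbhd // e_sym.
have ga : e g a.
  by apply: star_outside (I_biclique vmI) gvm a_g _; rewrite (disjointFr dj1 av1).
exact: e_tf ad dg ga.
Qed.

Let C := \bigcap_(v in I) KB_nbhd e v.

Lemma common_nbhd_surplus B1 B2 : 2 < #|I| -> B1 \in C -> B2 \in C -> B1 != B2 ->
  (exists2 B, B \in C & forall v, v \in I -> B \notin outer_stars v) \/
  (exists2 v, v \in I & 1 < #|outer_stars v|).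
Proof.
move=> I_gt2 B1C B2C B12.
have meets B v : B \in C -> v \in I -> B :&: v != set0.
  by move=> /bigcapP /(_ v) BC vI; have := BC vI; rewrite inE => /andP [].
have [/exists_inP [v1 v1I B1v1] | B1_out] := boolP [exists v in I, B1 \in outer_stars v];
  last by left; exists B1 => // v vI; apply: contra B1_out => B1v; apply/exists_inP; exists v.
have [/exists_inP [vk vkI B2vk] | B2_out] := boolP [exists v in I, B2 \in outer_stars v];
  last by left; exists B2 => // v vI; apply: contra B2_out => B2v; apply/exists_inP; exists v.
right; have [v1k | v1k] := eqVneq v1 vk.
  by exists vk => //; apply/card_gt1P; exists B1, B2; split; rewrite // -v1k.
have [a av1 [B1a _]] := outer_starsP _ _ B1v1.
have a_vk : star a :&: vk != set0 by rewrite -B1a meets.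
have [d dvk [ad d_out]] :=
  star_reaches (I_biclique v1I) (independent_disjoint v1I vkI v1k) av1 a_vk.
have [dB2 | dB2] := eqVneq (star d) B2; last first.
  by exists vk => //; apply/card_gt1P; exists (star d), B2.
have [vm vmI /andP [m1 mk]] := third_element v1 vk I_gt2.
have a_vm : star a :&: vm != set0 by rewrite -B1a meets.
have d_vm : star d :&: vm != set0 by rewrite dB2 meets.
by exists vm => //; apply: third_member_split v1I vkI vmI m1 mk av1 dvk ad a_vm d_vm.
Qed.

End IndependentSet.

End TriangleFreeBicliques.

Theorem theorem4 (T : finType) (e : rel T) (I : {set {set T}}) :
  simple_graph e -> triangle_free e ->
  KB_independent e I -> 3 <= #|I| ->
  3 <= #|\bigcap_(v in I) KB_nbhd e v| ->
  #|I| < #|\bigcup_(v in I) KB_nbhd e v|.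
Proof.
case=> e_sym e_irr e_tf I_indep I_gt2 C_ge3.
have I_bic : forall v, v \in I -> biclique e v := I_indep.1.
have [B1 [B2 [B1C B2C B12]]] : exists B1 B2,
    [/\ B1 \in \bigcap_(v in I) KB_nbhd e v, B2 \in \bigcap_(v in I) KB_nbhd e v & B1 != B2].
  by apply/card_gt1P; exact: leq_trans C_ge3.
have C_nbhd B v : B \in \bigcap_(v in I) KB_nbhd e v -> v \in I -> B \in KB_nbhd e v.
  by move/bigcapP; apply.
have [v0 v0I] : exists v0, v0 \in I by apply/card_gt0P; exact: leq_trans I_gt2.
apply: (@disjoint_family_card_lt _ _ I (outer_stars e)).
- move=> v vI; exact: (outer_stars_nonempty e_sym (I_bic v vI) (C_nbhd B1 v B1C vI)).
- move=> v w B; exact: (outer_stars_separate e_sym e_irr e_tf I_indep).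
- move=> v vI; apply/subsetP=> B Bv; apply/bigcupP; exists v => //.
  exact: (outer_stars_nbhd e_sym e_irr e_tf (I_bic v vI) Bv).
- case: (common_nbhd_surplus e_sym e_irr e_tf I_indep I_gt2 B1C B2C B12) => [[B BC B_out] | ];
    last by right.
  by left; exists B => //; apply/bigcupP; exists v0 => //; exact: C_nbhd.
Qed.
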